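(* Let $d,N\in\mathbb{N}$, $a_1,\dots,a_N\in\mathbb{R}^d$ and $b_1,\dots,b_N,c_1,\dots,c_N,\beta\in\mathbb{R}$ be fixed, and define $\Phi(x)=\sum_{i=1}^N c_i\,\mathrm{ReLU}(\langle a_i,x\rangle+b_i)+\beta$ and $\widetilde{\Phi}(x)=\sum_{i=1}^N c_i(\langle a_i,x\rangle+b_i)+\beta$ for $x\in\mathbb{R}^d$. Then $\mathrm{Lip}(\Phi)\ge\frac12\mathrm{Lip}(\widetilde{\Phi})$.
   Context: $\mathrm{ReLU}(t)=\max\{0,t\}$; $\mathrm{Lip}(f)=\sup_{x\neq y}|f(x)-f(y)|/\|x-y\|_2$. *)

From HB Require Import structures.
From mathcomp Require Import all_boot all_order all_algebra.
From mathcomp Require Import all_classical all_reals.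
From mathcomp Require Import ereal.
Set Implicit Arguments. Unset Strict Implicit. Unset Printing Implicit Defensive.
Import Order.TTheory GRing.Theory Num.Theory.
Local Open Scope ring_scope.
Local Open Scope classical_set_scope.

Section Defs.
Variable R : realType.

Definition ReLU (t : R) : R := Num.max 0 t.

Definition dotp (d : nat) (u v : 'I_d -> R) : R := \sum_(j < d) u j * v j.
Definition norm2 (d : nat) (u : 'I_d -> R) : R := Num.sqrt (dotp u u).

Definition Lip (d : nat) (f : ('I_d -> R) -> R) : \bar R :=
  ereal_sup [set r : \bar R | exists x y : 'I_d -> R,
     x <> y /\ r = ((`|f x - f y| / norm2 (fun j => x j - y j))%:E)].
End Defs.

From HB Require Import structures.
From mathcomp Require Import all_boot all_order all_algebra.
From mathcomp Require Import all_classical all_reals.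
From mathcomp Require Import ereal.
From mathcomp Require Import lra ring.
Set Implicit Arguments. Unset Strict Implicit. Unset Printing Implicit Defensive.
Import Order.TTheory GRing.Theory Num.Theory.
Local Open Scope ring_scope.
Local Open Scope classical_set_scope.

(* Let w := sum_i c_i a_i, so that Phit(x) - Phit(y) = <w, x - y> and Lip(Phit) <= |w| by
   Cauchy-Schwarz.  Since ReLU(s) - ReLU(-s) = s and ReLU is 1-Lipschitz, shifting the
   argument of each ReLU by b_i costs at most |b_i|, hence
   Phi(t w) - Phi(-t w) = t |w|^2 + O(1) as t -> +oo.  The points t w and -t w are at
   distance 2 t |w|, so the difference quotients of Phi approach |w| / 2. *)

Section Dotp.
Variables (R : realType) (d : nat).
Implicit Types (u v x y : 'I_d -> R) (r : R).

Lemma dotp_ge0 u : 0 <= dotp u u.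
Proof. by apply: sumr_ge0 => j _; rewrite -expr2 sqr_ge0. Qed.

Lemma norm2_ge0 u : 0 <= norm2 u.
Proof. exact: sqrtr_ge0. Qed.

Lemma sqr_norm2 u : norm2 u ^+ 2 = dotp u u.
Proof. by rewrite sqr_sqrtr // dotp_ge0. Qed.

Lemma dotpB u x y : dotp u x - dotp u y = dotp u (fun j => x j - y j).
Proof. by rewrite /dotp -sumrB; apply: eq_bigr => j _; rewrite mulrBr. Qed.

Lemma dotpZr u v r : dotp u (fun j => r * v j) = r * dotp u v.
Proof. by rewrite /dotp mulr_sumr; apply: eq_bigr => j _; rewrite mulrCA. Qed.

Lemma dotp_suml n (c : 'I_n -> R) (a : 'I_n -> 'I_d -> R) v :
  dotp (fun j => \sum_(i < n) c i * a i j) v = \sum_(i < n) c i * dotp (a i) v.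
Proof.
rewrite /dotp; under eq_bigr => j _ do rewrite mulr_suml.
rewrite exchange_big /=; apply: eq_bigr => i _.
by rewrite mulr_sumr; apply: eq_bigr => j _; rewrite mulrA.
Qed.

Lemma norm2Z r v : norm2 (fun j => r * v j) = `|r| * norm2 v.
Proof.
rewrite /norm2 (_ : dotp _ _ = r ^+ 2 * dotp v v).
  by rewrite sqrtrM ?sqr_ge0 // sqrtr_sqr.
by rewrite /dotp mulr_sumr; apply: eq_bigr => j _; ring.
Qed.

Lemma norm2_subrr x : norm2 (fun j => x j - x j) = 0.
Proof. by rewrite /norm2 /dotp big1 ?sqrtr0 // => j _; rewrite subrr mul0r. Qed.

Lemma dotp_Lagrange u v :
  \sum_(j < d) \sum_(k < d) (u j * v k - u k * v j) ^+ 2 =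
  (dotp u u * dotp v v - dotp u v ^+ 2) *+ 2.
Proof.
pose h j k := u j * u j * (v k * v k) - u j * v j * (u k * v k).
transitivity (\sum_(j < d) \sum_(k < d) (h j k + h k j)).
  by apply: eq_bigr => j _; apply: eq_bigr => k _; rewrite /h; ring.
under eq_bigr => j _ do rewrite big_split /=.
rewrite big_split /= [X in _ + X]exchange_big /= -mulr2n; congr (_ *+ 2).
under eq_bigr => j _ do rewrite /h sumrB -!mulr_sumr.
by rewrite sumrB -!mulr_suml expr2.
Qed.

Lemma dotp_sqr_le u v : dotp u v ^+ 2 <= dotp u u * dotp v v.
Proof.
have : 0 <= \sum_(j < d) \sum_(k < d) (u j * v k - u k * v j) ^+ 2.
  by apply: sumr_ge0 => j _; apply: sumr_ge0 => k _; exact: sqr_ge0.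
by rewrite dotp_Lagrange pmulrn_lge0 // subr_ge0.
Qed.

Lemma normr_dotp_le u v : `|dotp u v| <= norm2 u * norm2 v.
Proof.
rewrite -sqrtr_sqr /norm2 -sqrtrM ?dotp_ge0 //.
exact/ler_wsqrtr/dotp_sqr_le.
Qed.

Lemma normr_dotp_divr_le u v : `|dotp u v| / norm2 v <= norm2 u.
Proof.
have [->|nz] := eqVneq (norm2 v) 0; first by rewrite invr0 mulr0 norm2_ge0.
have v0 : 0 < norm2 v by rewrite lt0r nz norm2_ge0.
by rewrite ler_pdivrMr // normr_dotp_le.
Qed.

End Dotp.

Lemma lee_of_forall_pos_subr (R : realFieldType) (A K : R) (L : \bar R) :
  0 <= K -> (forall t, 0 < t -> ((A - K / t)%:E <= L)%E) -> (A%:E <= L)%E.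
Proof.
move=> K0 HL; apply/lee_addgt0Pr => e e0.
have t0 : 0 < (K + 1) / e by rewrite divr_gt0 // ltr_wpDl.
apply: (@le_trans _ _ ((A - e)%:E + e%:E)%E); first by rewrite -EFinD subrK.
rewrite leeD2r //; apply: le_trans (HL _ t0).
rewrite lee_fin lerB // invf_div mulrA ler_pdivrMr ?ltr_wpDl //; nra.
Qed.

Section Lipschitz.
Variables (R : realType) (d : nat) (f : ('I_d -> R) -> R).
Implicit Types (x y w : 'I_d -> R).

Lemma Lip_ub (C : R) :
  (forall x y, x <> y -> `|f x - f y| / norm2 (fun j => x j - y j) <= C) ->
  (Lip f <= C%:E)%E.
Proof. by move=> HC; apply: ge_ereal_sup => r [x [y [xy ->]]]; rewrite lee_fin HC. Qed.

Lemma Lip_lb x y : x <> y ->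
  ((`|f x - f y| / norm2 (fun j => x j - y j))%:E <= Lip f)%E.
Proof. by move=> xy; apply: ereal_sup_ubound; exists x, y. Qed.

Lemma Lip_ge0 x y : x <> y -> (0 <= Lip f)%E.
Proof.
move=> xy; apply: le_trans (Lip_lb xy).
by rewrite lee_fin divr_ge0 ?norm2_ge0.
Qed.

Lemma Lip_eqNy : ~ (exists x y, x <> y) -> Lip f = -oo%E.
Proof.
move=> same; rewrite /Lip (_ : [set r | _] = set0) ?ereal_sup0 //.
by apply/seteqP; split=> // r [x [y [xy _]]]; apply: same; exists x, y.
Qed.

Lemma Lip_affine_le w :
  (forall x y, f x - f y = dotp w (fun j => x j - y j)) ->
  (Lip f <= (norm2 w)%:E)%E.
Proof. by move=> fB; apply: Lip_ub => x y _; rewrite fB normr_dotp_divr_le. Qed.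

Lemma Lip_ge_antipodal w (K : R) : 0 < norm2 w -> 0 <= K ->
  (forall t, 0 < t ->
     t * norm2 w ^+ 2 - K <= `|f (fun j => t * w j) - f (fun j => - (t * w j))|) ->
  ((norm2 w / 2)%:E <= Lip f)%E.
Proof.
move=> w0 K0 Hf; apply: (@lee_of_forall_pos_subr _ _ (K / (2 * norm2 w))).
  by rewrite divr_ge0 // mulr_ge0 // ltW.
move=> t t0; set x := fun j => t * w j; set y := fun j => - (t * w j).
have Nxy : norm2 (fun j => x j - y j) = 2 * t * norm2 w.
  rewrite (_ : (fun j => _) = fun j => (2 * t) * w j) ?norm2Z ?gtr0_norm ?mulr_gt0 //.
  by apply: funext => j; rewrite /x /y; ring.
have Nxy0 : 0 < 2 * t * norm2 w by rewrite !mulr_gt0.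
have xy : x <> y by move=> xy; move: Nxy0; rewrite -Nxy xy norm2_subrr ltxx.
apply: le_trans _ (Lip_lb xy); rewrite lee_fin Nxy ler_pdivlMr //.
have -> : (norm2 w / 2 - K / (2 * norm2 w) / t) * (2 * t * norm2 w) =
          t * norm2 w ^+ 2 - K by field; rewrite !gt_eqF.
exact: Hf.
Qed.

End Lipschitz.

Section ReLU.
Variable R : realType.
Implicit Types s t p b : R.

Lemma ReLU_subN s : ReLU s - ReLU (- s) = s.
Proof. by rewrite /ReLU !maxEle; case: (lerP 0 s); case: (lerP 0 (- s)); lra. Qed.

Lemma ReLU_lipschitz s t : `|ReLU s - ReLU t| <= `|s - t|.
Proof.
rewrite /ReLU !maxEle; case: (lerP 0 (s - t)) => h;
  [rewrite (ger0_norm h) | rewrite (ltr0_norm h)];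
  case: (lerP 0 s); case: (lerP 0 t); rewrite ler_norml; lra.
Qed.

Lemma ReLU_antipodal_shift p b : `|ReLU (p + b) - ReLU (- p + b) - p| <= 2 * `|b|.
Proof.
rewrite -{3}(ReLU_subN p).
have -> : ReLU (p + b) - ReLU (- p + b) - (ReLU p - ReLU (- p)) =
          (ReLU (p + b) - ReLU p) - (ReLU (- p + b) - ReLU (- p)) by ring.
apply: le_trans (ler_normB _ _) _; rewrite mulr2n mulrDl mul1r.
by apply: lerD; apply: le_trans (ReLU_lipschitz _ _) _; rewrite addrAC subrr add0r.
Qed.

End ReLU.

Section TwoLayerNetwork.
Variables (R : realType) (d N : nat).
Variables (a : 'I_N -> 'I_d -> R) (b c : 'I_N -> R) (beta : R).
Implicit Types x y v : 'I_d -> R.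

Definition relu_net x := \sum_(i < N) c i * ReLU (dotp (a i) x + b i) + beta.
Definition lin_net x := \sum_(i < N) c i * (dotp (a i) x + b i) + beta.
Definition net_weight j := \sum_(i < N) c i * a i j.
Definition net_bias_bound := \sum_(i < N) `|c i| * (2 * `|b i|).

Lemma lin_netB x y : lin_net x - lin_net y = dotp net_weight (fun j => x j - y j).
Proof.
rewrite /lin_net opprD addrACA subrr addr0 -sumrB dotp_suml.
by apply: eq_bigr => i _; rewrite -dotpB; ring.
Qed.

Lemma relu_net_antipodal t v :
  `|relu_net (fun j => t * v j) - relu_net (fun j => - (t * v j))
    - t * dotp net_weight v| <= net_bias_bound.
Proof.
have dotpN u : dotp u (fun j => - (t * v j)) = - (t * dotp u v).
  by rewrite -dotpZr /dotp -sumrN; apply: eq_bigr => j _; rewrite mulrN.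
rewrite /relu_net opprD addrACA subrr addr0 -sumrB dotp_suml mulr_sumr -sumrB.
apply: le_trans (ler_norm_sum _ _ _) _; apply: ler_sum => i _.
rewrite dotpZr dotpN (mulrCA t) -!mulrBr normrM ler_wpM2l //.
exact: ReLU_antipodal_shift.
Qed.

Lemma Lip_lin_net_le : (Lip lin_net <= (norm2 net_weight)%:E)%E.
Proof. exact/Lip_affine_le/lin_netB. Qed.

Lemma Lip_relu_net_ge x y : x <> y -> ((norm2 net_weight / 2)%:E <= Lip relu_net)%E.
Proof.
move=> xy; have [w0|w_neq0] := eqVneq (norm2 net_weight) 0.
  by rewrite w0 mul0r; exact: Lip_ge0 xy.
apply: (Lip_ge_antipodal (K := net_bias_bound)).
- by rewrite lt0r w_neq0 norm2_ge0.
- by apply: sumr_ge0 => i _; rewrite !mulr_ge0.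
move=> t t0; rewrite sqr_norm2; apply: le_trans (ler_norm _).
by have := relu_net_antipodal t net_weight; rewrite ler_distl => /andP[].
Qed.

End TwoLayerNetwork.

Theorem proposition4p8 (R : realType) (d N : nat)
  (a : 'I_N -> 'I_d -> R) (b c : 'I_N -> R) (beta : R) :
  let Phi := fun x : 'I_d -> R =>
    \sum_(i < N) c i * ReLU (dotp (a i) x + b i) + beta in
  let Phit := fun x : 'I_d -> R =>
    \sum_(i < N) c i * (dotp (a i) x + b i) + beta in
  ((2^-1)%:E * Lip Phit <= Lip Phi)%E.
Proof.
rewrite /= -/(relu_net a b c beta) -/(lin_net a b c beta).
have [[x [y xy]] | no_pair] := pselect (exists x y : 'I_d -> R, x <> y); last first.
  by rewrite (Lip_eqNy _ no_pair) mulrNy gtr0_sg ?invr_gt0 // mul1e leNye.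
apply: le_trans (lee_wpmul2l _ (Lip_lin_net_le a b c beta)) _.
  by rewrite lee_fin invr_ge0.
by rewrite -EFinM mulrC; exact: Lip_relu_net_ge xy.
Qed.
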